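(* Let $w\in W^*(d,2m;\vec 0)$. Then $\Phi(\phi(w))$ and $w$ have the same sequence of positive steps if and only if $\Phi(\phi(w))=w$.
   Context: $n,r,d\ge1$, $m=rn$. $U=\{u_1\prec\cdots\prec u_n\}$, $V=\{v_1\prec\cdots\prec v_n\}$; $\overline U=U\times[r]$, $\overline V=V\times[r]$ ordered lexicographically (write $u^s$ for $(u,s)$). An $r$-configuration is a bijection between $\overline U$ and $\overline V$; a quasi configuration is a partial matching. Pairs $(\bar u,\bar v),(\bar u',\bar v')$ are noncrossing if ($\bar u\prec\bar u'$ and $\bar v\prec\bar v'$) or ($\bar u'\prec\bar u$ and $\bar v'\prec\bar v$). $W^*(d,2m;\vec0)$: walks $w=a_{u_1^1}\cdots a_{u_n^r}|b_{v_1^1}\cdots b_{v_n^r}$, $a_{\bar u},b_{\bar v}\in[d]$, in $\mathbb Z^d$ from the origin with steps $e_{a_{\bar u}}$ ($\bar u$ increasing) then $-e_{b_{\bar v}}$ ($\bar v$ increasing), ending at the origin; the positive steps are $a_{u_1^1}\cdots a_{u_n^r}$. For an $r$-configuration $F$: $a_{\bar u}$ is the maximum size of a set of pairwise noncrossing pairs of $F$ containing the pair $(\bar u,\bar v')\in F$, all of whose pairs $(x,y)$ satisfy $x\preceq\bar u$, $y\preceq\bar v'$; $b_{\bar v}$ symmetrically; $\Phi(F)=a_{u_1^1}\cdots a_{u_n^r}|b_{v_1^1}\cdots b_{v_n^r}$. $A_k(w)=\{\bar u:a_{\bar u}=k\}$, $B_k(w)=\{\bar v:b_{\bar v}=k\}$;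 connecting equal-size ordered sets $A,B$ in a crossing way: pair the $i$-th smallest of $A$ with the $i$-th largest of $B$; $\phi(w)$: for each $k$, if $|A_k(w)|\ge|B_k(w)|$ connect the $|B_k(w)|$ smallest elements of $A_k(w)$ with $B_k(w)$ in a crossing way, else connect $A_k(w)$ with the $|A_k(w)|$ largest elements of $B_k(w)$ in a crossing way. (For $w$ ending at the origin, $\phi(w)$ is an $r$-configuration, so $\Phi(\phi(w))$ is defined.) *)

From mathcomp Require Import all_boot all_order all_algebra.
Set Implicit Arguments. Unset Strict Implicit. Unset Printing Implicit Defensive.

(* Ubar = U x [r] and Vbar = V x [r], with u_i ~ i : 'I_n,
   s ~ s : 'I_r, both ordered lexicographically. *)
Definition bar (n r : nat) := ('I_n * 'I_r)%type.

Definition lex_lt n r (x y : bar n r) : bool :=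
  (x.1 < y.1)%N || ((x.1 == y.1) && (x.2 < y.2)%N).
Definition lex_le n r (x y : bar n r) : bool := (x == y) || lex_lt x y.

(* A walk w = a | b : letters are positive integers (the [d] condition is
   part of membership in W-star). *)
Definition walk n r := ({ffun bar n r -> nat} * {ffun bar n r -> nat})%type.

(* k-th coordinate (k in [d], 1-based) of the endpoint of the walk started at
   the origin: #(steps +e_k) - #(steps -e_k). *)
Definition endpoint_coord n r (w : walk n r) (k : nat) : int :=
  (#|[set u | w.1 u == k]|%:Z - #|[set v | w.2 v == k]|%:Z)%R.

(* W-star(d, 2m; 0) with m = r n *)
Definition inWstar (d n r : nat) (w : walk n r) : Prop :=
  (forall u, 1 <= w.1 u <= d) /\ (forall v, 1 <= w.2 v <= d) /\
  (forall k, 1 <= k <= d -> endpoint_coord w k = 0%R).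

Definition matching n r := {set (bar n r * bar n r)}.

Definition noncrossing n r (p q : bar n r * bar n r) : bool :=
  (lex_lt p.1 q.1 && lex_lt p.2 q.2) || (lex_lt q.1 p.1 && lex_lt q.2 p.2).

Definition pw_noncrossing n r (S : matching n r) : bool :=
  [forall p in S, forall q in S, (p != q) ==> noncrossing p q].

Definition chainlen n r (F : matching n r) (p : bar n r * bar n r) : nat :=
  \max_(S : matching n r | [&& S \subset F, p \in S, pw_noncrossing S &
        [forall q in S, lex_le q.1 p.1 && lex_le q.2 p.2]]) #|S|.

(* Phi(F): a_u uses the pair (u, v') of F, b_v the pair (u', v) of F
   (unique when F is an r-configuration). *)
Definition Phi n r (F : matching n r) : walk n r :=
  ([ffun u => \max_(v | (u, v) \in F) chainlen F (u, v)],
   [ffun v => \max_(u | (u, v) \in F) chainlen F (u, v)]).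

Definition rank_low n r (A : {set bar n r}) x := #|[set y in A | lex_lt y x]|.
Definition rank_high n r (A : {set bar n r}) x := #|[set y in A | lex_lt x y]|.

Definition smallest n r (c : nat) (A : {set bar n r}) :=
  [set x in A | rank_low A x < c].
Definition largest n r (c : nat) (B : {set bar n r}) :=
  [set y in B | rank_high B y < c].

Definition connect_crossing n r (A B : {set bar n r}) : matching n r :=
  [set p | [&& p.1 \in A, p.2 \in B & rank_low A p.1 == rank_high B p.2]].

Definition Aset n r (w : walk n r) k := [set u | w.1 u == k].
Definition Bset n r (w : walk n r) k := [set v | w.2 v == k].

Definition phi_k n r (w : walk n r) (k : nat) : matching n r :=
  let A := Aset w k in let B := Bset w k in
  if #|B| <= #|A| then connect_crossing (smallest #|B| A) B
  else connect_crossing A (largest #|A| B).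

Definition phi (d n r : nat) (w : walk n r) : matching n r :=
  \bigcup_(k < d) phi_k w k.+1.

(* The pairs of phi(w) join positions carrying the same letter, and each
   position is matched at most once; so whenever (u, v) is in phi(w), both
   a_u and b_v of Phi(phi(w)) equal the chain length of (u, v).  For w in
   W-star the letter counts |A_k| and |B_k| agree, so every v is matched.
   Hence if the positive steps of Phi(phi(w)) are those of w, then
   b_v = a_u = w.1 u = w.2 v for the partner u of v, and the negative steps
   agree as well. *)

From mathcomp Require Import all_boot all_order all_algebra.
From mathcomp Require Import zify.
Import GRing.Theory.

Set Implicit Arguments.
Unset Strict Implicit.
Unset Printing Implicit Defensive.

Section Ranks.
Variables n r : nat.
Implicit Types (x y z : bar n r) (S A B : {set bar n r}).

Lemma lex_ltE x y :
  lex_lt x y = (x.1 < y.1)%N || ((x.1 == y.1 :> nat) && (x.2 < y.2)%N).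
Proof. by []. Qed.

Lemma lex_ltxx x : ~~ lex_lt x x.
Proof. rewrite lex_ltE; lia. Qed.

Lemma lex_lt_trans x y z : lex_lt x y -> lex_lt y z -> lex_lt x z.
Proof. rewrite !lex_ltE; lia. Qed.

Lemma lex_lt_total x y : x != y -> lex_lt x y || lex_lt y x.
Proof.
case: x y => [a b] [c e]; rewrite !lex_ltE xpair_eqE -!val_eqE /=; lia.
Qed.

Lemma rank_low_lt_mono S x y :
  x \in S -> lex_lt x y -> rank_low S x < rank_low S y.
Proof.
move=> xS xy; apply/proper_card/properP; split.
  by apply/subsetP => z; rewrite !inE => /andP[-> /lex_lt_trans->].
by exists x; rewrite !inE ?xS ?xy ?(negbTE (lex_ltxx x)) ?andbF.
Qed.

Lemma rank_high_lt_mono S x y :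
  y \in S -> lex_lt x y -> rank_high S y < rank_high S x.
Proof.
move=> yS xy; apply/proper_card/properP; split.
  by apply/subsetP => z; rewrite !inE => /andP[-> yz]; apply: lex_lt_trans xy yz.
by exists y; rewrite !inE ?yS ?xy ?(negbTE (lex_ltxx y)) ?andbF.
Qed.

Lemma rank_low_inj S : {in S &, injective (rank_low S)}.
Proof.
move=> x y xS yS e; apply/eqP/negPn/negP => /lex_lt_total /orP[] lt.
  by have := rank_low_lt_mono xS lt; rewrite e ltnn.
by have := rank_low_lt_mono yS lt; rewrite e ltnn.
Qed.

Lemma rank_high_inj S : {in S &, injective (rank_high S)}.
Proof.
move=> x y xS yS e; apply/eqP/negPn/negP => /lex_lt_total /orP[] lt.
  by have := rank_high_lt_mono yS lt; rewrite e ltnn.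
by have := rank_high_lt_mono xS lt; rewrite e ltnn.
Qed.

Lemma rank_low_lt_card S x : x \in S -> rank_low S x < #|S|.
Proof.
move=> xS; apply/proper_card/properP; split.
  by apply/subsetP => z; rewrite inE => /andP[].
by exists x; rewrite // inE (negbTE (lex_ltxx x)) andbF.
Qed.

Lemma rank_high_lt_card S x : x \in S -> rank_high S x < #|S|.
Proof.
move=> xS; apply/proper_card/properP; split.
  by apply/subsetP => z; rewrite inE => /andP[].
by exists x; rewrite // inE (negbTE (lex_ltxx x)) andbF.
Qed.

(* An injection from S into [0, #|S|) is onto. *)
Lemma rank_low_onto S j : j < #|S| -> exists2 x, x \in S & rank_low S x = j.
Proof.
move=> ltj; set s := map (rank_low S) (enum S).
have s_uniq : uniq s.
  by rewrite map_inj_in_uniq ?enum_uniq // => x y; rewrite !mem_enum; apply: rank_low_inj.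
have s_sub : {subset s <= iota 0 #|S|}.
  by move=> i /mapP[x]; rewrite mem_enum mem_iota => /rank_low_lt_card ? ->.
have s_size : size (iota 0 #|S|) <= size s by rewrite size_iota size_map -cardE.
have [_ s_iota] := uniq_min_size s_uniq s_sub s_size.
have : j \in s by rewrite s_iota mem_iota.
by case/mapP => x; rewrite mem_enum => xS ->; exists x.
Qed.

Lemma smallest_card S : smallest #|S| S = S.
Proof. by apply/setP => x; rewrite inE andb_idr // => /rank_low_lt_card. Qed.

Lemma connect_crossing_fun A B u v v' :
  (u, v) \in connect_crossing A B -> (u, v') \in connect_crossing A B -> v = v'.
Proof.
rewrite !inE /= => /and3P[_ vB /eqP e] /and3P[_ v'B /eqP e'].
by apply: (rank_high_inj vB v'B); rewrite -e -e'.
Qed.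

Lemma connect_crossing_inj A B u u' v :
  (u, v) \in connect_crossing A B -> (u', v) \in connect_crossing A B -> u = u'.
Proof.
rewrite !inE /= => /and3P[uA _ /eqP e] /and3P[u'A _ /eqP e'].
by apply: (rank_low_inj uA u'A); rewrite e e'.
Qed.

Lemma connect_crossing_cover A B v : #|A| = #|B| -> v \in B ->
  exists2 u, u \in A & (u, v) \in connect_crossing A B.
Proof.
move=> eqAB vB; have := rank_high_lt_card vB; rewrite -eqAB => /rank_low_onto[u uA eu].
by exists u; rewrite // inE /= uA vB eu /=.
Qed.

End Ranks.

Section PhiOfMatching.
Variables n r : nat.
Implicit Types (F : matching n r) (u v : bar n r).

Lemma Phi_fst_matched F u v : (u, v) \in F ->
  (forall v', (u, v') \in F -> v' = v) -> (Phi F).1 u = chainlen F (u, v).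
Proof.
move=> uv uniq_v; rewrite ffunE (eq_bigl (pred1 v)) ?big_pred1_eq // => v' /=.
by apply/idP/eqP => [/uniq_v | ->].
Qed.

Lemma Phi_snd_matched F u v : (u, v) \in F ->
  (forall u', (u', v) \in F -> u' = u) -> (Phi F).2 v = chainlen F (u, v).
Proof.
move=> uv uniq_u; rewrite ffunE (eq_bigl (pred1 u)) ?big_pred1_eq // => u' /=.
by apply/idP/eqP => [/uniq_u | ->].
Qed.

End PhiOfMatching.

Section PhiOfWalk.
Variables n r : nat.
Variable w : walk n r.
Implicit Types (u v : bar n r) (p : bar n r * bar n r).

Lemma mem_phi_k k p : p \in phi_k w k -> w.1 p.1 = k /\ w.2 p.2 = k.
Proof.
rewrite /phi_k; case: ifP => _; rewrite inE !inE => /and3P[].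
  by move=> /andP[/eqP-> _] /eqP->.
by move=> /eqP-> /andP[/eqP-> _].
Qed.

Lemma phi_k_fun k u v v' :
  (u, v) \in phi_k w k -> (u, v') \in phi_k w k -> v = v'.
Proof. by rewrite /phi_k; case: ifP => _; apply: connect_crossing_fun. Qed.

Lemma phi_k_inj k u u' v :
  (u, v) \in phi_k w k -> (u', v) \in phi_k w k -> u = u'.
Proof. by rewrite /phi_k; case: ifP => _; apply: connect_crossing_inj. Qed.

Lemma phi_k_balanced k : #|Aset w k| = #|Bset w k| ->
  phi_k w k = connect_crossing (Aset w k) (Bset w k).
Proof. by move=> eqAB; rewrite /phi_k -eqAB leqnn smallest_card. Qed.

Variable d : nat.

Lemma mem_phi_label p : p \in phi d w -> w.1 p.1 = w.2 p.2.
Proof. by case/bigcupP => k _ /mem_phi_k[-> ->]. Qed.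

(* Both pairs lie in the same phi_k, namely the one of the letter w.1 u. *)
Lemma phi_fun u v v' : (u, v) \in phi d w -> (u, v') \in phi d w -> v = v'.
Proof.
case/bigcupP => k _ uv /bigcupP[k' _ uv'].
have [ek _] := mem_phi_k uv; have [ek' _] := mem_phi_k uv'.
by move: uv'; rewrite -ek' /= ek; apply: phi_k_fun.
Qed.

Lemma phi_inj u u' v : (u, v) \in phi d w -> (u', v) \in phi d w -> u = u'.
Proof.
case/bigcupP => k _ uv /bigcupP[k' _ u'v].
have [_ ek] := mem_phi_k uv; have [_ ek'] := mem_phi_k u'v.
by move: u'v; rewrite -ek' /= ek; apply: phi_k_inj.
Qed.

Lemma phi_cover v : inWstar d w -> exists u, (u, v) \in phi d w.
Proof.
move=> [_ [w2_range closed]]; set k := w.2 v.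
have /andP[k_gt0 k_le_d] := w2_range v.
have eqAB : #|Aset w k| = #|Bset w k|.
  by move/eqP: (closed k (w2_range v)); rewrite subr_eq0 => /eqP[].
have vB : v \in Bset w k by rewrite inE.
have [u _ uv] := connect_crossing_cover eqAB vB.
have k_lt : k.-1 < d by rewrite prednK.
exists u; apply/bigcupP; exists (Ordinal k_lt) => //.
by rewrite /= prednK // (phi_k_balanced eqAB).
Qed.

End PhiOfWalk.

Theorem lemma7 (n r d : nat) (hn : 0 < n) (hr : 0 < r) (hd : 0 < d)
  (w : walk n r) :
  inWstar d w ->
  ((Phi (phi d w)).1 = w.1 <-> Phi (phi d w) = w).
Proof.
move=> wW; split => [eq1 | -> //].
have eq2 : (Phi (phi d w)).2 = w.2.
  apply/ffunP => v; have [u uv] := phi_cover v wW.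
  rewrite (Phi_snd_matched uv (fun u' u'v => phi_inj u'v uv)).
  rewrite -(Phi_fst_matched uv (fun v' uv' => phi_fun uv' uv)) eq1.
  exact: mem_phi_label uv.
by move: (Phi _) eq1 eq2 => [a b] /= -> ->; case: w wW.
Qed.
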